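(* For every $d\in\mathbb N$, $\delta>1$ and $\gamma>\delta$ there is a constant $t_{min}=t_{min}(d,\gamma,\delta)>0$ such that the following holds. Let $G$ be any group generated by a set $X$ of $d$ elements, and let $g,h\in G$ be of infinite order with $w_g(n)\in\omega(\gamma^n)$ and $w_h(n)\in o(\delta^n)$ (growth functions with respect to $X$). Then $t(g^{\pm\infty},h^{\pm\infty})\ge t_{min}$ and $t(g^\infty,h^\infty)\ge t_{min}$.
   Context: $d_X$ denotes the word metric of $G$ with respect to $X$. For $g$ of infinite order, $g^\infty=\{g^n:n\in\mathbb N\}$ and $g^{\pm\infty}=\{g^k:k\in\mathbb Z\}$. For $\alpha>0$, $c\in\mathbb N$, cones are $\alpha\cdot g^\infty+c=\{v:\exists n\in\mathbb N,\ d_X(v,g^n)\le\alpha\, d_X(1,g^n)+c\}$ and $\alpha\cdot g^{\pm\infty}+c=\{v:\exists k\in\mathbb Z,\ d_X(v,g^k)\le\alpha\, d_X(1,g^k)+c\}$. For $x,y$ both forward orbits (or both orbits) write $x\subseteq\alpha\cdot y+c$ if every element of $x$ lies in the cone around $y$, set $s(x,y)=\inf\{\alpha>0:\exists c\in\mathbb N,\ x\subseteq\alpha\cdot y+c\text{ and } y\subseteq\alpha\cdot x+c\}$ and $t=\sqrt s$. The growth of $g$ is $w_g(n)=|\{i\in\mathbb Z: d_X(1,g^i)\le n\}|$. $w_g(n)\in\omega(\gamma^n)$ means $w_g(n)/\gamma^n\to\infty$; $w_h(n)\in o(\delta^n)$ means $w_h(n)/\delta^n\to0$. *)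

From Stdlib Require Import Reals ZArith List Lia Classical ClassicalEpsilon.
Open Scope R_scope.

Record grp := Grp {
  car :> Type;
  gmul : car -> car -> car;
  ginv : car -> car;
  gone : car;
  gmul_assoc : forall x y z, gmul x (gmul y z) = gmul (gmul x y) z;
  gmul_1l : forall x, gmul gone x = x;
  gmul_Vl : forall x, gmul (ginv x) x = gone
}.

Section GroupDefs.
Variable G : grp.

Fixpoint gpow (g : G) (n : nat) : G :=
  match n with O => gone G | S m => gmul G g (gpow g m) end.

Definition gpowZ (g : G) (k : Z) : G :=
  match k with
  | Z0 => gone G
  | Zpos p => gpow g (Pos.to_nat p)
  | Zneg p => ginv G (gpow g (Pos.to_nat p))
  end.

Definition inf_order (g : G) : Prop := forall n : nat, (0 < n)%nat -> gpow g n <> gone G.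

Definition letter (X : list G) (x : G) : Prop :=
  In x X \/ exists y, In y X /\ x = ginv G y.

Definition word_prod (w : list G) : G := fold_right (gmul G) (gone G) w.

Definition has_word_len (X : list G) (g : G) (n : nat) : Prop :=
  exists w, length w = n /\ Forall (letter X) w /\ word_prod w = g.

Definition generates (X : list G) : Prop := forall g : G, exists n, has_word_len X g n.

Definition wlen (X : list G) (g : G) : nat :=
  epsilon (inhabits 0%nat)
    (fun n => has_word_len X g n /\ forall m, has_word_len X g m -> (n <= m)%nat).

Definition dX (X : list G) (u v : G) : nat := wlen X (gmul G (ginv G u) v).

Definition cone {I : Type} (X : list G) (O : I -> G) (alpha : R) (c : nat) (v : G) : Prop :=
  exists i : I, INR (dX X v (O i)) <= alpha * INR (dX X (gone G) (O i)) + INR c.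

Definition sub_cone {I : Type} (X : list G) (x y : I -> G) (alpha : R) (c : nat) : Prop :=
  forall i : I, cone X y alpha c (x i).

End GroupDefs.

Definition is_glb (E : R -> Prop) (m : R) : Prop :=
  (forall x, E x -> m <= x) /\ (forall b, (forall x, E x -> b <= x) -> b <= m).

Definition Inf (E : R -> Prop) : R := epsilon (inhabits 0) (is_glb E).

Definition s_dist (G : grp) {I : Type} (X : list G) (x y : I -> G) : R :=
  Inf (fun alpha => 0 < alpha /\ exists c : nat, sub_cone G X x y alpha c /\ sub_cone G X y x alpha c).

Definition t_dist (G : grp) {I : Type} (X : list G) (x y : I -> G) : R :=
  sqrt (s_dist G X x y).

(* forward orbit g^∞ (indexed by nat) and full orbit g^{±∞} (indexed by Z) *)
Definition fwd_orbit (G : grp) (g : G) : nat -> G := gpow G g.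
Definition full_orbit (G : grp) (g : G) : Z -> G := gpowZ G g.

(* cardinality of a finite set of integers (0 if infinite) *)
Definition card_Z (P : Z -> Prop) : nat :=
  epsilon (inhabits 0%nat)
    (fun k => exists l : list Z, NoDup l /\ (forall i, In i l <-> P i) /\ length l = k).

Definition growth (G : grp) (X : list G) (g : G) (n : nat) : nat :=
  card_Z (fun i => (dX G X (gone G) (gpowZ G g i) <= n)%nat).

From Stdlib Require Import Reals ZArith List FinFun Lia Lra Psatz Classical ClassicalEpsilon.
Open Scope R_scope.

(* Let K = 2d+1, so that a ball of radius r for the word metric has at most
   K^r elements.  Suppose the forward orbit of g lies in the cone
   alpha.h^{+-oo} + c with alpha (M+1) <= 1.  For each power g^a choose a cone
   point h^j close to g^a; the map g^a |-> (h^j, h^-j g^a) is injective, and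
   |g^a| <= M k forces |h^j| <= (M+1)k + 2c and |h^-j g^a| <= k + 3c.  Hence
       w_g(M k) <= 2 w_h((M+1)k + 2c) K^(k+3c)    for all k,
   which is impossible when w_g is in omega(gamma^n), w_h in o(delta^n) and
   delta^(M+1) K <= gamma^M.  Such an M depends only on d, gamma, delta, so
   every admissible alpha is at least 1/(M+1); and alpha = 2, c = 0 is always
   admissible since orbits of elements of infinite order are unbounded.
   Therefore t >= sqrt (1/(M+1)) for full and forward orbits alike. *)

Section GroupFacts.
Variable G : grp.

Lemma gmul_Vr (x : G) : gmul G x (ginv G x) = gone G.
Proof.
  rewrite <- (gmul_1l G (gmul G x (ginv G x))).
  rewrite <- (gmul_Vl G (ginv G x)) at 1.
  rewrite <- gmul_assoc, (gmul_assoc G (ginv G x) x), gmul_Vl, gmul_1l.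
  apply gmul_Vl.
Qed.

Lemma gmul_1r (x : G) : gmul G x (gone G) = x.
Proof. rewrite <- (gmul_Vl G x), gmul_assoc, gmul_Vr. apply gmul_1l. Qed.

Lemma ginv_unique (a b : G) : gmul G a b = gone G -> b = ginv G a.
Proof.
  intro Hab. rewrite <- (gmul_1l G b), <- (gmul_Vl G a), <- gmul_assoc, Hab.
  apply gmul_1r.
Qed.

Lemma ginvK (x : G) : ginv G (ginv G x) = x.
Proof. symmetry. apply ginv_unique, gmul_Vl. Qed.

Lemma ginv1 : ginv G (gone G) = gone G.
Proof. symmetry. apply ginv_unique, gmul_1l. Qed.

Lemma ginv_mul (a b : G) : ginv G (gmul G a b) = gmul G (ginv G b) (ginv G a).
Proof.
  symmetry. apply ginv_unique.
  rewrite <- gmul_assoc, (gmul_assoc G b), gmul_Vr, gmul_1l. apply gmul_Vr.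
Qed.

Lemma gpow_add (g : G) p q : gpow G g (p + q) = gmul G (gpow G g p) (gpow G g q).
Proof.
  induction p as [|p IH]; simpl.
  - now rewrite gmul_1l.
  - rewrite IH. apply gmul_assoc.
Qed.

Lemma gpowZ_of_nat (g : G) a : gpowZ G g (Z.of_nat a) = gpow G g a.
Proof. destruct a; [reflexivity|]. simpl. now rewrite SuccNat2Pos.id_succ. Qed.

Lemma gpow_inj (g : G) : inf_order G g -> forall a b, gpow G g a = gpow G g b -> a = b.
Proof.
  intros Hg.
  assert (Hlt : forall a b, (a < b)%nat -> gpow G g a <> gpow G g b).
  { intros a b Hab E. replace b with ((b - a) + a)%nat in E by lia.
    rewrite gpow_add in E.
    apply (f_equal (fun z => gmul G z (ginv G (gpow G g a)))) in E.
    rewrite gmul_Vr, <- gmul_assoc, gmul_Vr, gmul_1r in E.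
    apply (Hg (b - a)%nat); [lia | auto]. }
  intros a b E. destruct (Nat.lt_trichotomy a b) as [H | [H | H]]; auto.
  - exfalso. now apply (Hlt a b).
  - exfalso. now apply (Hlt b a).
Qed.

End GroupFacts.

Lemma ex_least (P : nat -> Prop) :
  (exists n, P n) -> exists n, P n /\ forall m, P m -> (n <= m)%nat.
Proof.
  intros [n Hn]. revert Hn. induction n as [n IH] using lt_wf_ind. intro Hn.
  destruct (classic (exists m, (m < n)%nat /\ P m)) as [[m [Hm Pm]] | Hno].
  - exact (IH m Hm Pm).
  - exists n. split; auto. intros m Pm. destruct (Nat.le_gt_cases n m); auto.
    exfalso; apply Hno; eauto.
Qed.

Section WordMetric.
Variables (G : grp) (X : list G).
Hypothesis HX : generates G X.

Lemma wlen_spec (g : G) :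
  has_word_len G X g (wlen G X g) /\ forall m, has_word_len G X g m -> (wlen G X g <= m)%nat.
Proof. unfold wlen. apply epsilon_spec, ex_least, HX. Qed.

Lemma word_prod_app (w1 w2 : list G) :
  word_prod G (w1 ++ w2) = gmul G (word_prod G w1) (word_prod G w2).
Proof.
  induction w1 as [|x w1 IH]; simpl.
  - now rewrite gmul_1l.
  - rewrite IH. apply gmul_assoc.
Qed.

Lemma word_prod_inv (w : list G) :
  word_prod G (rev (map (ginv G) w)) = ginv G (word_prod G w).
Proof.
  induction w as [|x w IH]; simpl.
  - symmetry; apply ginv1.
  - rewrite word_prod_app, IH, ginv_mul. simpl. now rewrite gmul_1r.
Qed.

Lemma wlen_mul (a b : G) : (wlen G X (gmul G a b) <= wlen G X a + wlen G X b)%nat.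
Proof.
  destruct (wlen_spec a) as [[w1 [L1 [F1 P1]]] _].
  destruct (wlen_spec b) as [[w2 [L2 [F2 P2]]] _].
  apply (proj2 (wlen_spec (gmul G a b))).
  exists (w1 ++ w2). rewrite length_app, L1, L2. repeat split.
  - now apply Forall_app.
  - now rewrite word_prod_app, P1, P2.
Qed.

Lemma wlen_inv_le (a : G) : (wlen G X (ginv G a) <= wlen G X a)%nat.
Proof.
  destruct (wlen_spec a) as [[w [L [F P]]] _].
  apply (proj2 (wlen_spec _)).
  exists (rev (map (ginv G) w)). rewrite length_rev, length_map. repeat split; auto.
  - apply Forall_rev, Forall_map. eapply Forall_impl; [|exact F].
    intros x [Hx | [y [Hy ->]]]; unfold letter.
    + right; eauto.
    + left; now rewrite ginvK.
  - now rewrite word_prod_inv, P.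
Qed.

Lemma wlen_inv (a : G) : wlen G X (ginv G a) = wlen G X a.
Proof.
  apply Nat.le_antisymm; [apply wlen_inv_le|].
  rewrite <- (ginvK G a) at 1. apply wlen_inv_le.
Qed.

Lemma dX_1 (a : G) : dX G X (gone G) a = wlen G X a.
Proof. unfold dX. now rewrite ginv1, gmul_1l. Qed.

Lemma wlen_le_dX (a b : G) : (wlen G X b <= wlen G X a + dX G X a b)%nat.
Proof.
  unfold dX. replace b with (gmul G a (gmul G (ginv G a) b)) at 1.
  - apply wlen_mul.
  - rewrite gmul_assoc, gmul_Vr. apply gmul_1l.
Qed.

Lemma dX_le (a b : G) : (dX G X a b <= wlen G X a + wlen G X b)%nat.
Proof. unfold dX. rewrite <- (wlen_inv a). apply wlen_mul. Qed.

Lemma wlen_gpowZ (g : G) i : wlen G X (gpowZ G g i) = wlen G X (gpow G g (Z.abs_nat i)).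
Proof. destruct i; simpl; auto. now rewrite wlen_inv. Qed.

End WordMetric.

(* The list of all products of at most r letters of X ∪ X^-1; it contains the
   ball of radius r and has (2|X|+1)^r entries. *)
Definition letters (G : grp) (X : list G) : list G := gone G :: X ++ map (ginv G) X.

Fixpoint ball (G : grp) (X : list G) (r : nat) : list G :=
  match r with
  | O => gone G :: nil
  | S r => map (fun p => gmul G (fst p) (snd p)) (list_prod (letters G X) (ball G X r))
  end.

Lemma ball_length (G : grp) (X : list G) r :
  length (ball G X r) = Nat.pow (S (2 * length X)) r.
Proof.
  induction r as [|r IH]; [reflexivity|].
  change (ball G X (S r)) with
    (map (fun p => gmul G (fst p) (snd p)) (list_prod (letters G X) (ball G X r))).
  rewrite length_map, length_prod, IH. unfold letters.
  simpl length. rewrite length_app, length_map. simpl. lia.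
Qed.

Lemma ball_words (G : grp) (X : list G) : forall r w,
  Forall (letter G X) w -> (length w <= r)%nat -> In (word_prod G w) (ball G X r).
Proof.
  induction r as [|r IH]; intros w F L.
  - destruct w; simpl in *; [now left | lia].
  - change (ball G X (S r)) with
      (map (fun p => gmul G (fst p) (snd p)) (list_prod (letters G X) (ball G X r))).
    apply in_map_iff. destruct w as [|a w].
    + exists (gone G, gone G). split; [apply gmul_1l|].
      apply in_prod; [now left|]. apply (IH nil); simpl; auto; lia.
    + exists (a, word_prod G w). split; auto. inversion F as [|? ? Ha Fw]; subst.
      apply in_prod.
      * right. apply in_or_app.
        destruct Ha as [Ha | [y [Hy ->]]]; [left; auto | right; now apply in_map].
      * apply IH; auto. simpl in L; lia.
Qed.

Lemma ball_wlen (G : grp) (X : list G) r u :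
  generates G X -> (wlen G X u <= r)%nat -> In u (ball G X r).
Proof.
  intros HX Hu. destruct (wlen_spec G X HX u) as [[w [L [F P]]] _]. subst u.
  apply ball_words; auto; lia.
Qed.

Lemma finite_enum (P : Z -> Prop) {A : Type} (T : list A) (phi : Z -> A)
  (Hin : forall i, P i -> In (phi i) T)
  (Hinj : forall i i', P i -> P i' -> phi i = phi i' -> i = i') :
  exists l, NoDup l /\ (forall i, In i l <-> P i) /\ (length l <= length T)%nat.
Proof.
  set (e := fun t => epsilon (inhabits 0%Z) (fun i => P i /\ phi i = t)).
  assert (He : forall i, P i -> e (phi i) = i).
  { intros i Pi. assert (Hs : P (e (phi i)) /\ phi (e (phi i)) = phi i).
    { unfold e. apply epsilon_spec. eauto. }
    destruct Hs. apply Hinj; auto. }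
  set (b := fun i => if excluded_middle_informative (P i) then true else false).
  assert (Hb : forall i, b i = true <-> P i).
  { intro i. unfold b. destruct (excluded_middle_informative (P i)); intuition discriminate. }
  exists (nodup Z.eq_dec (filter b (map e T))). repeat split.
  - apply NoDup_nodup.
  - intro Hi. rewrite nodup_In, filter_In, Hb in Hi. tauto.
  - intro Pi. rewrite nodup_In, filter_In, Hb. split; auto.
    apply in_map_iff. exists (phi i). auto.
  - eapply Nat.le_trans.
    + apply NoDup_incl_length; [apply NoDup_nodup|].
      intros x Hx. rewrite nodup_In, filter_In in Hx. apply (proj1 Hx).
    + rewrite length_map. apply le_n.
Qed.

Lemma card_Z_eq (P : Z -> Prop) l :
  NoDup l -> (forall i, In i l <-> P i) -> card_Z P = length l.
Proof.
  intros N H.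
  assert (Hs : exists l', NoDup l' /\ (forall i, In i l' <-> P i) /\ length l' = card_Z P).
  { unfold card_Z.
    apply (epsilon_spec (inhabits 0%nat)
      (fun k => exists l0, NoDup l0 /\ (forall i, In i l0 <-> P i) /\ length l0 = k)).
    exists (length l), l. auto. }
  destruct Hs as [l' [N' [H' L']]]. rewrite <- L'.
  apply Nat.le_antisymm; apply NoDup_incl_length; auto; intros x Hx.
  - apply H, H', Hx.
  - apply H', H, Hx.
Qed.

Lemma card_Z_le (P : Z -> Prop) {A : Type} (T : list A) (phi : Z -> A)
  (Hin : forall i, P i -> In (phi i) T)
  (Hinj : forall i i', P i -> P i' -> phi i = phi i' -> i = i') :
  (card_Z P <= length T)%nat.
Proof.
  destruct (finite_enum P T phi Hin Hinj) as [l [N [H L]]]. now rewrite (card_Z_eq P l).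
Qed.

Lemma sign_abs_inj (i i' : Z) :
  Z.ltb i 0 = Z.ltb i' 0 -> Z.abs_nat i = Z.abs_nat i' -> i = i'.
Proof. intros H1 H2. destruct (Z.ltb_spec i 0), (Z.ltb_spec i' 0); try discriminate; lia. Qed.

Definition short_powers (G : grp) (X : list G) (g : G) (n : nat) : Z -> Prop :=
  fun i => (dX G X (gone G) (gpowZ G g i) <= n)%nat.

(* For g of infinite order, i |-> (sign i, g^|i|) embeds the exponents counted
   by w_g(n) into a finite set, so they are enumerated by a list of length
   w_g(n). *)
Lemma growth_enum (G : grp) (X : list G) (g : G) (n : nat) :
  generates G X -> inf_order G g ->
  exists l, NoDup l /\ (forall i, In i l <-> short_powers G X g n i) /\ growth G X g n = length l.
Proof.
  intros HX Hg.
  destruct (finite_enum (short_powers G X g n) (list_prod (true :: false :: nil) (ball G X n))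
     (fun i => (Z.ltb i 0, gpow G g (Z.abs_nat i)))) as [l [N [H _]]].
  - intros i Hi. apply in_prod; [destruct (Z.ltb i 0); simpl; auto|].
    apply ball_wlen; auto. unfold short_powers in Hi. now rewrite dX_1, wlen_gpowZ in Hi.
  - intros i i' _ _ E. injection E as E1 E2. apply sign_abs_inj; auto.
    now apply (gpow_inj G g Hg).
  - exists l. repeat split; auto; [apply H | apply H|]. apply card_Z_eq; auto.
Qed.

(* The length estimates behind the counting: with a = |h^j|, w = |g^a'|,
   d = d(g^a', h^j), the cone condition d <= alpha a + c and alpha(m+1) <= 1
   bound both a and d linearly in k. *)
Lemma cone_length_bounds (a w d k c m al : R) :
  0 <= a -> 0 <= c -> 1 <= m -> 0 < al -> al * (m + 1) <= 1 ->
  w <= m * k -> a <= w + d -> d <= al * a + c ->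
  a <= (m + 1) * k + 2 * c /\ d <= k + 3 * c.
Proof.
  intros Ha Hc Hm Hal Halm Hw Hawd Hd.
  assert (p1 : al * a * (m + 1) <= a).
  { replace (al * a * (m + 1)) with (a * (al * (m + 1))) by ring.
    rewrite <- (Rmult_1_r a) at 2. apply Rmult_le_compat_l; auto. }
  assert (p2 : (m + 1) * d <= (m + 1) * (al * a + c)) by (apply Rmult_le_compat_l; lra).
  assert (p3 : m * d <= m * k + (m + 1) * c) by nra.
  assert (p4 : d <= k + 2 * c).
  { assert (m * (d - k - 2 * c) <= 0) by nra. nra. }
  split; lra.
Qed.

Lemma growth_comparison (G : grp) (X : list G) (g h : G) (al : R) (c M : nat) :
  generates G X -> inf_order G g -> inf_order G h ->
  (forall a : nat, cone G X (full_orbit G h) al c (gpow G g a)) ->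
  0 < al -> al * (INR M + 1) <= 1 -> (1 <= M)%nat ->
  forall k, (growth G X g (M * k) <= 2 * (growth G X h ((M + 1) * k + 2 * c) *
              Nat.pow (S (2 * length X)) (k + 3 * c)))%nat.
Proof.
  intros HX Hg Hh Hcone Hal HalM HM k.
  destruct (growth_enum G X h ((M + 1) * k + 2 * c) HX Hh) as [Lh [NLh [HLh ELh]]].
  rewrite ELh, <- (ball_length G X (k + 3 * c)).
  set (near := fun (a : nat) (j : Z) => INR (dX G X (gpow G g a) (gpowZ G h j)) <=
      al * INR (dX G X (gone G) (gpowZ G h j)) + INR c).
  set (jf := fun a => epsilon (inhabits 0%Z) (near a)).
  assert (Hjf : forall a, near a (jf a)) by (intro a; apply epsilon_spec, Hcone).
  set (uf := fun a : nat => gmul G (ginv G (gpowZ G h (jf a))) (gpow G g a)).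
  assert (Huf : forall a, gmul G (gpowZ G h (jf a)) (uf a) = gpow G g a).
  { intro a. unfold uf. rewrite gmul_assoc, gmul_Vr. apply gmul_1l. }
  replace (2 * (length Lh * length (ball G X (k + 3 * c))))%nat with
     (length (list_prod (true :: false :: nil) (list_prod Lh (ball G X (k + 3 * c)))))
     by (rewrite !length_prod; reflexivity).
  apply (card_Z_le (short_powers G X g (M * k)) _
     (fun i => (Z.ltb i 0, (jf (Z.abs_nat i), uf (Z.abs_nat i))))).
  - intros i Hi. set (a := Z.abs_nat i).
    unfold short_powers in Hi. rewrite dX_1, wlen_gpowZ in Hi; auto. fold a in Hi.
    assert (T1 := wlen_le_dX G X HX (gpow G g a) (gpowZ G h (jf a))).
    assert (T2 := Hjf a). unfold near in T2. rewrite dX_1 in T2.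
    destruct (cone_length_bounds (INR (wlen G X (gpowZ G h (jf a)))) (INR (wlen G X (gpow G g a)))
       (INR (dX G X (gpow G g a) (gpowZ G h (jf a)))) (INR k) (INR c) (INR M) al)
      as [Bh Bu]; auto using pos_INR.
    + apply (le_INR 1). auto.
    + rewrite <- mult_INR. apply le_INR. auto.
    + rewrite <- plus_INR. apply le_INR. auto.
    + apply in_prod; [destruct (Z.ltb i 0); simpl; auto|]. apply in_prod.
      * apply HLh. unfold short_powers. rewrite dX_1. apply INR_le.
        rewrite plus_INR, !mult_INR, plus_INR. simpl (INR 1). simpl (INR 2). lra.
      * apply ball_wlen; auto.
        assert (Eu : uf a = ginv G (gmul G (ginv G (gpow G g a)) (gpowZ G h (jf a)))).
        { unfold uf. now rewrite ginv_mul, ginvK. }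
        rewrite Eu, wlen_inv; auto. fold (dX G X (gpow G g a) (gpowZ G h (jf a))).
        apply INR_le. rewrite plus_INR, mult_INR. simpl (INR 3). lra.
  - intros i i' _ _ E. injection E as E1 E2 E3. apply sign_abs_inj; auto.
    apply (gpow_inj G g Hg). now rewrite <- (Huf (Z.abs_nat i)), <- Huf, E2, E3.
Qed.

(* The growth comparison is incompatible with w_g in omega(gamma^n) and
   w_h in o(delta^n) as soon as delta^(M+1) K <= gamma^M: along n = M k the
   left side beats C (gamma^M)^k while the right side stays below
   C (delta^(M+1) K)^k, with C = 2 delta^(2c) K^(3c). *)
Lemma growth_comparison_absurd (wg wh : nat -> nat) (M c K : nat) (delta gamma : R) :
  1 < delta -> delta < gamma -> (1 <= M)%nat -> (0 < K)%nat ->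
  delta ^ (M + 1) * INR K <= gamma ^ M ->
  (forall k, (wg (M * k) <= 2 * (wh ((M + 1) * k + 2 * c) * Nat.pow K (k + 3 * c)))%nat) ->
  cv_infty (fun n => INR (wg n) / gamma ^ n) ->
  Un_cv (fun n => INR (wh n) / delta ^ n) 0 -> False.
Proof.
  intros Hd Hdg HM HK0 HK Hineq Hg Hh.
  set (C := 2 * delta ^ (2 * c) * INR K ^ (3 * c)).
  destruct (Hg C) as [Ng HNg].
  destruct (Hh 1 ltac:(lra)) as [Nh HNh].
  set (k := (Ng + Nh)%nat).
  set (m := ((M + 1) * k + 2 * c)%nat).
  assert (Pd : 0 < delta ^ m) by (apply pow_lt; lra).
  assert (Pg : 0 < gamma ^ (M * k)) by (apply pow_lt; lra).
  assert (PK : 0 < INR K) by (apply lt_0_INR; lia).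
  assert (Hslow : INR (wh m) < delta ^ m).
  { assert (B := HNh m ltac:(unfold m, k; nia)).
    unfold R_dist in B. rewrite Rminus_0_r in B. apply Rabs_def2 in B as [B _].
    apply (Rmult_lt_compat_r (delta ^ m)) in B; auto.
    unfold Rdiv in B. rewrite Rmult_assoc, Rinv_l, Rmult_1_r, Rmult_1_l in B; lra. }
  assert (Hfast : C * (gamma ^ M) ^ k < INR (wg (M * k)%nat)).
  { assert (A := HNg (M * k)%nat ltac:(unfold k; nia)).
    apply (Rmult_lt_compat_r (gamma ^ (M * k))) in A; auto.
    unfold Rdiv in A. rewrite Rmult_assoc, Rinv_l, Rmult_1_r, pow_mult in A; lra. }
  assert (Hcmp := Hineq k). fold m in Hcmp.
  apply le_INR in Hcmp. rewrite !mult_INR, pow_INR in Hcmp. change (INR 2) with 2 in Hcmp.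
  assert (Edelta : delta ^ m = delta ^ (2 * c) * (delta ^ (M + 1)) ^ k).
  { unfold m. rewrite pow_add, pow_mult. ring. }
  assert (Hpow : (delta ^ (M + 1)) ^ k * INR K ^ k <= (gamma ^ M) ^ k).
  { rewrite <- Rpow_mult_distr. apply pow_incr. split; auto.
    apply Rmult_le_pos; [apply pow_le|]; lra. }
  assert (PKk : 0 < INR K ^ (k + 3 * c)) by (apply pow_lt; lra).
  assert (PC : 0 < delta ^ (2 * c) * INR K ^ (3 * c)) by (apply Rmult_lt_0_compat; apply pow_lt; lra).
  assert (Hx : INR (wh m) * INR K ^ (k + 3 * c) < delta ^ m * INR K ^ (k + 3 * c))
    by (apply Rmult_lt_compat_r; auto).
  rewrite Edelta, pow_add in Hx. rewrite pow_add in Hcmp. unfold C in Hfast.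
  assert (2 * (delta ^ (2 * c) * INR K ^ (3 * c)) * ((delta ^ (M + 1)) ^ k * INR K ^ k)
          <= 2 * (delta ^ (2 * c) * INR K ^ (3 * c)) * (gamma ^ M) ^ k)
    by (apply Rmult_le_compat_l; lra).
  nra.
Qed.

(* Since delta/gamma < 1, some M >= 1 satisfies delta^(M+1) K <= gamma^M. *)
Lemma exists_gap_exponent (delta gamma K : R) :
  1 < delta -> delta < gamma -> 0 < K ->
  exists M : nat, (1 <= M)%nat /\ delta ^ (M + 1) * K <= gamma ^ M.
Proof.
  intros Hd Hdg HK.
  assert (Hratio : 0 <= delta / gamma < 1).
  { split; [apply Rmult_le_pos; [lra | apply Rlt_le, Rinv_0_lt_compat; lra]|].
    apply (Rmult_lt_reg_r gamma); [lra|]. unfold Rdiv.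
    rewrite Rmult_assoc, Rinv_l; lra. }
  destruct (pow_lt_1_zero (delta / gamma) ltac:(rewrite Rabs_right; lra)
     (/ (delta * K)) ltac:(apply Rinv_0_lt_compat, Rmult_lt_0_compat; lra)) as [N HN].
  exists (S N). split; [lia|].
  specialize (HN (S N) ltac:(lia)).
  rewrite Rabs_right in HN by (apply Rle_ge, pow_le; lra).
  assert (Pg : 0 < gamma ^ S N) by (apply pow_lt; lra).
  unfold Rdiv in HN. rewrite Rpow_mult_distr, pow_inv in HN.
  apply (Rmult_lt_compat_r (gamma ^ S N * (delta * K))) in HN;
    [|apply Rmult_lt_0_compat; [lra | apply Rmult_lt_0_compat; lra]].
  replace (delta ^ S N * / gamma ^ S N * (gamma ^ S N * (delta * K)))
    with (delta ^ S N * delta * K) in HN by (field; lra).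
  replace (/ (delta * K) * (gamma ^ S N * (delta * K))) with (gamma ^ S N) in HN
    by (field; split; lra).
  rewrite pow_add, pow_1. lra.
Qed.

Lemma cone_slope_lower_bound (G : grp) (X : list G) (g h : G) (M : nat) (delta gamma : R) :
  generates G X -> inf_order G g -> inf_order G h ->
  1 < delta -> delta < gamma -> (1 <= M)%nat ->
  delta ^ (M + 1) * INR (S (2 * length X)) <= gamma ^ M ->
  cv_infty (fun n => INR (growth G X g n) / gamma ^ n) ->
  Un_cv (fun n => INR (growth G X h n) / delta ^ n) 0 ->
  forall al c, 0 < al ->
  (forall a : nat, cone G X (full_orbit G h) al c (gpow G g a)) ->
  1 / (INR M + 1) <= al.
Proof.
  intros HX Hg Hh Hd Hdg HM HK Cg Ch al c Hal Hc.
  destruct (Rle_lt_dec (1 / (INR M + 1)) al) as [L | L]; auto. exfalso.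
  assert (PM : 0 < INR M + 1) by (generalize (pos_INR M); lra).
  assert (Hsmall : al * (INR M + 1) <= 1).
  { apply (Rmult_lt_compat_r (INR M + 1)) in L; auto.
    unfold Rdiv in L. rewrite Rmult_assoc, Rinv_l in L; lra. }
  apply (growth_comparison_absurd (growth G X g) (growth G X h) M c (S (2 * length X))
           delta gamma); auto; [lia|].
  now apply (growth_comparison G X g h al c M).
Qed.

Lemma cone_fwd_full (G : grp) (X : list G) (h v : G) al c :
  cone G X (fwd_orbit G h) al c v -> cone G X (full_orbit G h) al c v.
Proof.
  intros [j Hj]. exists (Z.of_nat j). unfold full_orbit. now rewrite gpowZ_of_nat.
Qed.

Definition unbounded (G : grp) (X : list G) {I : Type} (O : I -> G) : Prop :=
  forall B, exists i, (B <= wlen G X (O i))%nat.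

(* Infinitely many distinct powers cannot all lie in a finite ball. *)
Lemma fwd_orbit_unbounded (G : grp) (X : list G) (h : G) :
  generates G X -> inf_order G h -> unbounded G X (fwd_orbit G h).
Proof.
  intros HX Hh B. apply NNPP. intro Hno.
  assert (Hall : forall j, (wlen G X (gpow G h j) <= B)%nat).
  { intro j. destruct (Nat.le_gt_cases (wlen G X (gpow G h j)) B); auto.
    exfalso. apply Hno. exists j. unfold fwd_orbit. lia. }
  set (L := length (ball G X B)).
  assert (Hlen : (length (map (gpow G h) (seq 0 (S L))) <= L)%nat).
  { apply NoDup_incl_length.
    - apply (Injective_map_NoDup (gpow_inj G h Hh)), seq_NoDup.
    - intros x Hx. apply in_map_iff in Hx as [j [<- _]]. now apply ball_wlen. }
  rewrite length_map, length_seq in Hlen. lia.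
Qed.

Lemma full_orbit_unbounded (G : grp) (X : list G) (h : G) :
  generates G X -> inf_order G h -> unbounded G X (full_orbit G h).
Proof.
  intros HX Hh B. destruct (fwd_orbit_unbounded G X h HX Hh B) as [j Hj].
  exists (Z.of_nat j). unfold full_orbit. now rewrite gpowZ_of_nat.
Qed.

(* Every family lies in the cone of slope 2 around an unbounded orbit:
   pick O i with |O i| >= |v|, then d(v, O i) <= |v| + |O i| <= 2 |O i|. *)
Lemma sub_cone_unbounded (G : grp) (X : list G) {I : Type} (x O : I -> G) :
  generates G X -> unbounded G X O -> sub_cone G X x O 2 0.
Proof.
  intros HX HO v. destruct (HO (wlen G X (x v))) as [i Hi].
  exists i. rewrite dX_1. assert (T := dX_le G X HX (x v) (O i)).
  apply le_INR in Hi, T. rewrite plus_INR in T. simpl (INR 0). lra.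
Qed.

Lemma Inf_glb (E : R -> Prop) :
  (exists x, E x) -> (forall x, E x -> 0 <= x) -> is_glb E (Inf E).
Proof.
  intros [x Ex] Hpos. unfold Inf. apply epsilon_spec.
  destruct (completeness (fun y => E (- y))) as [m [Hm1 Hm2]].
  - exists 0. intros y Ey. apply Hpos in Ey. lra.
  - exists (- x). now rewrite Ropp_involutive.
  - exists (- m). split.
    + intros z Ez. assert (- z <= m) by (apply Hm1; now rewrite Ropp_involutive). lra.
    + intros b Hb. assert (m <= - b).
      { apply Hm2. intros y Ey. apply Hb in Ey. lra. }
      lra.
Qed.

Lemma t_dist_lower_bound (G : grp) {I : Type} (X : list G) (x y : I -> G) (a0 : R) :
  generates G X -> unbounded G X x -> unbounded G X y ->
  (forall al c, 0 < al -> sub_cone G X x y al c -> a0 <= al) ->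
  sqrt a0 <= t_dist G X x y.
Proof.
  intros HX Hx Hy Hlow. unfold t_dist, s_dist. apply sqrt_le_1_alt.
  set (E := fun alpha => 0 < alpha /\
              exists c : nat, sub_cone G X x y alpha c /\ sub_cone G X y x alpha c).
  assert (Hglb : is_glb E (Inf E)).
  { apply Inf_glb.
    - exists 2. split; [lra|]. exists 0%nat. split; now apply sub_cone_unbounded.
    - intros z [Hz _]. lra. }
  apply (proj2 Hglb). intros z [Hz [c [Hc _]]]. eauto.
Qed.

Theorem theorem1p3 :
  forall (d : nat) (delta gamma : R), 1 < delta -> delta < gamma ->
  exists tmin : R, 0 < tmin /\
    forall (G : grp) (X : list G),
      length X = d -> NoDup X -> generates G X ->
      forall g h : G, inf_order G g -> inf_order G h ->
        cv_infty (fun n => INR (growth G X g n) / gamma ^ n) ->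
        Un_cv (fun n => INR (growth G X h n) / delta ^ n) 0 ->
        tmin <= t_dist G X (full_orbit G g) (full_orbit G h) /\
        tmin <= t_dist G X (fwd_orbit G g) (fwd_orbit G h).
Proof.
  intros d delta gamma Hd Hdg.
  destruct (exists_gap_exponent delta gamma (INR (S (2 * d))) Hd Hdg
              ltac:(apply lt_0_INR; lia)) as [M [HM HK]].
  exists (sqrt (1 / (INR M + 1))). split.
  { apply sqrt_lt_R0, Rdiv_lt_0_compat; [lra|]. generalize (pos_INR M); lra. }
  intros G X HXd _ HX g h Hg Hh Cg Ch. subst d.
  assert (Hlow := cone_slope_lower_bound G X g h M delta gamma HX Hg Hh Hd Hdg HM HK Cg Ch).
  split; apply t_dist_lower_bound; auto using fwd_orbit_unbounded, full_orbit_unbounded.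
  - intros al c Hal Hc. apply (Hlow al c Hal). intro a.
    specialize (Hc (Z.of_nat a)). unfold full_orbit in Hc at 1. now rewrite gpowZ_of_nat in Hc.
  - intros al c Hal Hc. apply (Hlow al c Hal). intro a. apply cone_fwd_full, Hc.
Qed.
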